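(* Let $g:\mathbb{R}^m\to\overline{\mathbb{R}}$ be a polyhedral function and $(\bar z,\bar\lambda)\in\mathrm{gph}\,\partial g$. The following are equivalent: (a) there is a neighborhood $O$ of $(\bar z,\bar\lambda)$ such that for every $(z,\lambda)\in O\cap\mathrm{gph}\,\partial g$, $g$ is strictly twice epi-differentiable at $z$ for $\lambda$; (b) $\bar\lambda\in\mathrm{ri}\,\partial g(\bar z)$.
   Context: A proper function $g:\mathbb{R}^m\to\overline{\mathbb{R}}$ is polyhedral if its epigraph is a polyhedral convex set; $\partial g$ is the convex-analysis subdifferential; $\mathrm{ri}$ is relative interior. For $f:\mathbb{R}^n\to\overline{\mathbb{R}}$, $f(x)$ finite, $v\in\partial f(x)$, $t>0$, set $\Delta_t^2 f(x,v)(w)=\frac{f(x+tw)-f(x)-t\langle v,w\rangle}{\frac12 t^2}$. A family of functions epi-converges to a function if their epigraphs converge to its epigraph in the Painlevé–Kuratowski sense. $f$ is strictly twice epi-differentiable at $\bar x$ for $\bar v\in\partial f(\bar x)$ if the functions $\Delta_t^2 f(x,v)$ epi-converge to some function as $t\searrow 0$ and $(x,v)\to(\bar x,\bar v)$ with $(x,v)\in\mathrm{gph}\,\partial f$ and $f(x)\to f(\bar x)$. *)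

From HB Require Import structures.
From mathcomp Require Import all_boot all_order all_algebra.
From mathcomp Require Import all_classical all_reals all_analysis.
Set Implicit Arguments. Unset Strict Implicit. Unset Printing Implicit Defensive.
Import Order.TTheory GRing.Theory Num.Theory.
Import numFieldNormedType.Exports.
Local Open Scope classical_set_scope.
Local Open Scope ring_scope.

Section Defs.
Variable R : realType.

Definition dotv (n : nat) (x y : 'rV[R]_n) : R := \sum_(i < n) x ord0 i * y ord0 i.

Definition epi (n : nat) (f : 'rV[R]_n -> \bar R) : set ('rV[R]_n * R) :=
  [set p | (f p.1 <= p.2%:E)%E].

Definition proper_fun (n : nat) (f : 'rV[R]_n -> \bar R) : Prop :=
  (forall x, f x <> -oo%E) /\ (exists x, f x \is a fin_num).

Definition polyhedral_set (n : nat) (C : set ('rV[R]_n * R)) : Prop :=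
  exists (k : nat) (a : 'I_k -> 'rV[R]_n) (b c : 'I_k -> R),
    C = [set p | forall i, dotv (a i) p.1 + b i * p.2 <= c i].

Definition polyhedral (n : nat) (f : 'rV[R]_n -> \bar R) : Prop :=
  proper_fun f /\ polyhedral_set (epi f).

Definition subdiff (n : nat) (f : 'rV[R]_n -> \bar R) (x : 'rV[R]_n) : set 'rV[R]_n :=
  [set v | f x \is a fin_num /\ forall y, (f x + (dotv v (y - x)%R)%:E <= f y)%E].

Definition aff_hull (n : nat) (C : set 'rV[R]_n) : set 'rV[R]_n :=
  [set w | exists (k : nat) (p : 'I_k -> 'rV[R]_n) (c : 'I_k -> R),
      (forall i, C (p i)) /\ \sum_(i < k) c i = 1 /\ w = \sum_(i < k) c i *: p i].

Definition rel_int (n : nat) (C : set 'rV[R]_n) : set 'rV[R]_n :=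
  [set v | C v /\ \forall w \near v, aff_hull C w -> C w].

Definition sodq (n : nat) (f : 'rV[R]_n -> \bar R) (x v : 'rV[R]_n) (t : R)
    (w : 'rV[R]_n) : \bar R :=
  ((f (x + t *: w)%R - f x - (t * dotv v w)%R%:E) * (2 / t ^+ 2)%R%:E)%E.

Definition PK_cvg (T : topologicalType) (C : nat -> set T) (D : set T) : Prop :=
  (forall y, D y -> exists yk : nat -> T,
       (\forall k \near \oo, C k (yk k)) /\ yk @ \oo --> y) /\
  (forall (y : T) (s : nat -> nat) (yk : nat -> T),
       (forall k, (s k < s k.+1)%N) -> (forall k, C (s k) (yk k)) ->
       yk @ \oo --> y -> D y).

Definition epi_cvg (n : nat) (fk : nat -> 'rV[R]_n -> \bar R) (phi : 'rV[R]_n -> \bar R) :=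
  PK_cvg (fun k => epi (fk k)) (epi phi).

Definition strictly_twice_epi_diff (n : nat) (f : 'rV[R]_n -> \bar R)
    (xbar vbar : 'rV[R]_n) : Prop :=
  subdiff f xbar vbar /\
  exists phi : 'rV[R]_n -> \bar R,
    forall (t : nat -> R) (x v : nat -> 'rV[R]_n),
      (forall k, 0 < t k) -> t @ \oo --> (0 : R) ->
      x @ \oo --> xbar -> v @ \oo --> vbar ->
      (forall k, subdiff f (x k) (v k)) ->
      (fun k => f (x k)) @ \oo --> f xbar ->
      epi_cvg (fun k => sodq f (x k) (v k) (t k)) phi.

End Defs.

From HB Require Import structures.
From mathcomp Require Import all_boot all_order all_algebra.
From mathcomp Require Import all_classical all_reals all_analysis.
From mathcomp Require Import ring lra.
Import Order.TTheory GRing.Theory Num.Theory.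
Import numFieldNormedType.Exports.
Local Open Scope classical_set_scope.
Local Open Scope ring_scope.
Set Implicit Arguments. Unset Strict Implicit. Unset Printing Implicit Defensive.

(* Near (zbar, g zbar) the epigraph of g coincides with the polyhedral cone
   K = {(u, s) | a_i.u + b_i s <= 0 for the active constraints i}, so that
   subdiff g zbar = {v | v.u <= s on K}, and the second-order quotients at
   (zbar, lbar) can only epi-converge to the indicator of the critical cone
   {w | (w, lbar.w) in K}. Both (a) and (b) are equivalent to the orthogonality
   of subdiff g zbar - lbar to the critical cone.
   (a) gives orthogonality: if q + lbar is a subgradient and w is critical, then
   q.w <= 0, while comparing the quotients at lbar and at lbar + e q with step
   e^2 in the epi-limit forces q.w >= 0.
   Orthogonality makes the critical cone the subspace orthogonal to the active
   normals a_i + b_i lbar. By Farkas' lemma subdiff g zbar - lbar lies in their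
   span, and bounding coefficients in that span shows that a neighbourhood of
   lbar in the affine hull consists of subgradients: (b).
   (b) lets every subgradient v near lbar be reflected to 2 lbar - v and
   2 v - lbar. This pins every graph point (z, l) near (zbar, lbar) to the same
   face: g z = g zbar + lbar.(z - zbar), l is a subgradient at zbar and the
   critical subspace is unchanged, so at all of them the quotients epi-converge
   to its indicator: (a). *)

Section Dotv.
Variables (R : realType) (m : nat).
Implicit Types (x y z : 'rV[R]_m).

Lemma dotvC x y : dotv x y = dotv y x.
Proof. by apply: eq_bigr => i _; rewrite mulrC. Qed.

Lemma dotvDl x y z : dotv (x + y) z = dotv x z + dotv y z.
Proof. by rewrite /dotv -big_split; apply: eq_bigr => i _; rewrite !mxE mulrDl. Qed.

Lemma dotvZl a x y : dotv (a *: x) y = a * dotv x y.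
Proof. by rewrite /dotv mulr_sumr; apply: eq_bigr => i _; rewrite !mxE mulrA. Qed.

Lemma dotvNl x y : dotv (- x) y = - dotv x y.
Proof. by rewrite -scaleN1r dotvZl mulN1r. Qed.

Lemma dotvBl x y z : dotv (x - y) z = dotv x z - dotv y z.
Proof. by rewrite dotvDl dotvNl. Qed.

Lemma dotv0l y : dotv 0 y = 0.
Proof. by rewrite -(scale0r 0) dotvZl mul0r. Qed.

Lemma dotvDr x y z : dotv x (y + z) = dotv x y + dotv x z.
Proof. by rewrite dotvC dotvDl !(dotvC x). Qed.

Lemma dotvZr a x y : dotv x (a *: y) = a * dotv x y.
Proof. by rewrite dotvC dotvZl dotvC. Qed.

Lemma dotvNr x y : dotv x (- y) = - dotv x y.
Proof. by rewrite dotvC dotvNl dotvC. Qed.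

Lemma dotvBr x y z : dotv x (y - z) = dotv x y - dotv x z.
Proof. by rewrite dotvDr dotvNr. Qed.

Lemma dotv0r x : dotv x 0 = 0.
Proof. by rewrite dotvC dotv0l. Qed.

Lemma dotv_norm_le x y : `|dotv x y| <= m%:R * `|x| * `|y|.
Proof.
have entry_le z i : `|z ord0 i| <= `|z|.
  change (`|z ord0 i| <= mx_norm z); rewrite mx_normrE.
  exact: (le_bigmax _ (fun ij : 'I_1 * 'I_m => `|z ij.1 ij.2|) (ord0, i)).
apply: le_trans (ler_norm_sum _ _ _) _.
rewrite -mulrA -[m in m%:R]card_ord -sumr_const mulr_suml.
by apply: ler_sum => i _; rewrite mul1r normrM ler_pM.
Qed.

Lemma dotv_gt0 x : x != 0 -> 0 < dotv x x.
Proof.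
move=> x0; have [i xi0] : exists i, x ord0 i != 0.
  apply/existsP; apply: contraR x0; rewrite negb_exists => /forallP x0.
  by apply/eqP/rowP => i; rewrite mxE; apply/eqP/negPn.
rewrite /dotv (bigD1 i) //= ltr_pwDl ?sumr_ge0 // => [|j _].
  by rewrite -expr2 lt_def sqrf_eq0 xi0 sqr_ge0.
by rewrite -expr2 sqr_ge0.
Qed.

Lemma dotv_cvg (x y : nat -> 'rV[R]_m) (lx ly : 'rV[R]_m) :
  x @ \oo --> lx -> y @ \oo --> ly ->
  (fun n => dotv (x n) (y n)) @ \oo --> dotv lx ly.
Proof.
move=> hx hy; apply: (@cvg_big _ _ _ _ _ _ _ _ _ (fun i n => x n ord0 i * y n ord0 i)).
  exact: add_continuous.
move=> i _; apply: cvgM.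
  exact: cvg_comp hx (@coord_continuous R 1 m ord0 i lx).
exact: cvg_comp hy (@coord_continuous R 1 m ord0 i ly).
Qed.

End Dotv.

Local Ltac row_ring := apply/rowP => ?; rewrite !mxE; ring.

Section FiniteCones.
Variables (R : realType) (m : nat).
Implicit Types (a c e u : 'rV[R]_m) (s : seq 'rV[R]_m).

Fixpoint in_cone s c : Prop :=
  if s is a :: s' then exists2 mu : R, 0 <= mu & in_cone s' (c - mu *: a)
  else c = 0.

Fixpoint in_span s c : Prop :=
  if s is a :: s' then exists y : R, in_span s' (c - y *: a) else c = 0.

Lemma in_cone_unproject a u s c : 0 < dotv a u -> {in s, forall e, dotv e u <= 0} ->
  in_cone [seq e - (dotv e u / dotv a u) *: a | e <- s] c ->
  exists2 nu, 0 <= nu & in_cone s (c - nu *: a).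
Proof.
move=> au; elim: s c => [|e s IH] c s_u /=.
  by move=> ->; exists 0 => //; row_ring.
have eu : dotv e u / dotv a u <= 0.
  by rewrite mulr_le0_ge0 ?s_u ?mem_head // invr_ge0 ltW.
case=> mu mu0 /(IH _ (sub_in1 (@mem_behead _ (e :: s)) s_u)) [nu nu0 hnu].
exists (nu - mu * (dotv e u / dotv a u)).
  by rewrite subr_ge0 (le_trans _ nu0) // mulr_ge0_le0.
exists mu => //; congr (in_cone s _): hnu; row_ring.
Qed.

Lemma farkas s c :
  in_cone s c \/ exists2 u, {in s, forall e, dotv e u <= 0} & 0 < dotv c u.
Proof.
move Hn : (size s) => n; elim: n s c Hn => [|n IH] [|a s] c //= => [_|[Hs]].
  have [->|c0] := eqVneq c 0; first by left.
  by right; exists c => //; apply: dotv_gt0.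
have [Hc|[u s_u cu]] := IH s c Hs.
  by left; exists 0 => //; rewrite scale0r subr0.
have [au|au] := leP (dotv a u) 0.
  by right; exists u => // e; rewrite in_cons => /orP[/eqP->|/s_u].
(* Otherwise project along [a] onto the hyperplane [dotv _ u = 0] and recurse. *)
pose proj x := x - (dotv x u / dotv a u) *: a.
have := IH [seq proj x | x <- s] (proj c); rewrite size_map => /(_ Hs).
case=> [Hp|[u' s_u' cu']].
  have [nu nu0 Hn] := in_cone_unproject au s_u Hp.
  left; exists (dotv c u / dotv a u + nu); first by rewrite addr_ge0 // divr_ge0 // ltW.
  by congr (in_cone s _): Hn; rewrite /proj; row_ring.
pose u'' := u' - (dotv a u' / dotv a u) *: u.
have proj_dotv x : dotv x u'' = dotv (proj x) u'.
  by rewrite /proj dotvBr dotvZr dotvBl dotvZl (dotvC a u'); field; rewrite gt_eqF.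
right; exists u''; last by rewrite proj_dotv.
move=> e; rewrite in_cons => /orP[/eqP->|es].
  by rewrite dotvBr dotvZr mulfVK ?subrr ?gt_eqF.
by rewrite proj_dotv s_u' ?map_f.
Qed.

Lemma in_cone_dotv_le s c : in_cone s c -> exists2 M, 0 <= M &
  forall u (Y : R), 0 <= Y -> {in s, forall e, dotv e u <= Y} -> dotv c u <= M * Y.
Proof.
elim: s c => [|a s IH] c /=.
  by move=> ->; exists 0 => // u Y _ _; rewrite dotv0l mul0r.
case=> mu mu0 /IH [M M0 HM]; exists (M + mu) => [|u Y Y0 s_u]; first exact: addr_ge0.
have := HM u Y Y0 (sub_in1 (@mem_behead _ (a :: s)) s_u).
have := ler_wpM2l mu0 (s_u a (mem_head _ _)).
rewrite dotvBl dotvZl mulrDl; lra.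
Qed.

Lemma in_span0 s : in_span s 0.
Proof. by elim: s => [|a s IH] //=; exists 0; rewrite scale0r subr0. Qed.

Lemma in_spanD s c1 c2 : in_span s c1 -> in_span s c2 -> in_span s (c1 + c2).
Proof.
elim: s c1 c2 => [|a s IH] c1 c2 /=; first by move=> -> ->; rewrite addr0.
case=> [y1 /IH h1] [y2 /h1 h2]; exists (y1 + y2); congr (in_span s _): h2; row_ring.
Qed.

Lemma in_spanZ s k c : in_span s c -> in_span s (k *: c).
Proof.
elim: s c => [|a s IH] c /=; first by move=> ->; rewrite scaler0.
by case=> y /IH h; exists (k * y); congr (in_span s _): h; row_ring.
Qed.

Lemma in_span_dotv_eq0 s c u : in_span s c -> {in s, forall e, dotv e u = 0} ->
  dotv c u = 0.
Proof.
elim: s c => [|a s IH] c /=; first by move=> ->; rewrite dotv0l.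
case=> y /IH h s_u; have := h (sub_in1 (@mem_behead _ (a :: s)) s_u).
by rewrite dotvBl dotvZl (s_u a) ?mem_head // mulr0 subr0.
Qed.

Lemma in_cone_sym_span s c :
  in_cone (flatten [seq [:: e; - e] | e <- s]) c -> in_span s c.
Proof.
elim: s c => [|e s IH] c //= [mu _ [nu _ /IH h]].
by exists (mu - nu); congr (in_span s _): h; row_ring.
Qed.

Lemma farkas_span s c :
  in_span s c \/ exists2 u, {in s, forall e, dotv e u = 0} & 0 < dotv c u.
Proof.
have [/in_cone_sym_span|[u s_u cu]] := farkas (flatten [seq [:: e; - e] | e <- s]) c.
  by left.
right; exists u => // e es.
have mem_sym f : f \in [:: e; - e] -> f \in flatten [seq [:: e; - e] | e <- s].
  by move=> fe; apply/flattenP; exists [:: e; - e]; rewrite ?map_f.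
apply/eqP; rewrite eq_le s_u ?mem_sym ?mem_head //= -oppr_le0 -dotvNl.
by rewrite s_u ?mem_sym // !inE eqxx orbT.
Qed.

Lemma in_span_dotv_le s : exists2 k, 0 <= k & forall c u (B : R), in_span s c ->
  {in s, forall e, `|dotv e u| <= B} -> dotv c u <= k * `|c| * B.
Proof.
elim: s => [|a s [k0 k00 IH]].
  by exists 0 => // c u B /= ->; rewrite dotv0l normr0 !mulr0 mul0r.
have IHs c u B : in_span s c -> {in a :: s, forall e, `|dotv e u| <= B} ->
    dotv c u <= k0 * `|c| * B.
  by move=> hc s_u; apply: IH hc (sub_in1 (@mem_behead _ (a :: s)) s_u).
have [a_s|[u0 s_u0 au0]] := farkas_span s a.
  exists k0 => // c u B [y hc]; apply: IHs.
  by rewrite -(subrK (y *: a) c); apply: in_spanD (in_spanZ _ a_s).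
pose k1 := m%:R * `|u0| / dotv a u0.
have k10 : 0 <= k1 by rewrite divr_ge0 ?mulr_ge0 // ltW.
exists (k1 + k0 * (1 + k1 * `|a|)) => [|c u B [y hc] s_u].
  by rewrite addr_ge0 // mulr_ge0 // addr_ge0 // mulr_ge0.
have B0 : 0 <= B := le_trans (normr_ge0 _) (s_u a (mem_head _ _)).
(* [u0] is orthogonal to [s], so it reads off the coefficient [y] of [a] in [c]. *)
have y_eq : y * dotv a u0 = dotv c u0.
  by apply/eqP; rewrite eq_sym -subr_eq0 -dotvZl -dotvBl (in_span_dotv_eq0 hc s_u0).
have y_le : `|y| <= k1 * `|c|.
  rewrite /k1 mulrAC ler_pdivlMr // -(gtr0_norm au0) -normrM y_eq.
  by rewrite mulrAC; apply: dotv_norm_le.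
have cya_le : `|c - y *: a| <= (1 + k1 * `|a|) * `|c|.
  apply: le_trans (ler_normB _ _) _; rewrite normrZ.
  have := ler_wpM2r (normr_ge0 a) y_le; rewrite mulrDl mul1r mulrAC; lra.
have ya_le : y * dotv a u <= k1 * `|c| * B.
  apply: le_trans (ler_norm _) _; rewrite normrM.
  by apply: ler_pM => //; exact: s_u (mem_head _ _).
have := ler_wpM2r B0 (ler_wpM2l k00 cya_le).
have := IHs _ _ _ hc s_u.
have -> : dotv c u = dotv (c - y *: a) u + y * dotv a u by rewrite dotvBl dotvZl subrK.
have -> : (k1 + k0 * (1 + k1 * `|a|)) * `|c| * B =
   k1 * `|c| * B + k0 * ((1 + k1 * `|a|) * `|c|) * B by ring.
lra.
Qed.

End FiniteCones.

Section Limits.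
Variable R : realType.

Lemma near_norm_lt (T : Type) (F : set_system T) {FF : Filter F}
    (V : normedModType R) (u : T -> V) (l : V) (d : R) :
  u @ F --> l -> `|l| < d -> \forall x \near F, `|u x| < d.
Proof. by move=> /cvg_norm /cvgr_lt; apply. Qed.

Lemma near_normZ_lt (V : normedModType R) (t : nat -> R) (w : V) (e : R) :
  t @ \oo --> (0 : R) -> 0 < e -> \forall n \near \oo, `|t n *: w| < e.
Proof.
move=> t_cvg e0; apply: (@near_norm_lt _ _ _ _ _ 0); last by rewrite normr0.
by rewrite -(scale0r w); apply: cvgZ t_cvg (cvg_cst w).
Qed.

Lemma exists_pos_ray (V : normedModType R) (rho : R) (u w : V) (s tau : R) :
  `|u| < rho -> `|s| < rho ->
  exists2 t, 0 < t & `|u + t *: w| < rho /\ `|s + t * tau| < rho.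
Proof.
have ray_cvg (W : normedModType R) (x y : W) : x + t *: y @[t --> (0 : R)] --> x.
  rewrite -[X in _ --> X]addr0 -(scale0r y).
  by apply: cvgD (cvg_cst x) (cvgZ cvg_id (cvg_cst y)).
move=> /(near_norm_lt (ray_cvg _ u w)) hw /(near_norm_lt (ray_cvg _ s tau)) htau.
near (0 : R)^'+ => t.
exists t; [near: t; exact: nbhs_right_gt | split].
  by near: t; exact: cvg_within hw.
by near: t; exact: cvg_within htau.
Unshelve. all: by end_near. Qed.

Lemma cvg_subseq (T : topologicalType) (u : nat -> T) (l : T) (s : nat -> nat) :
  (forall n, (s n < s n.+1)%N) -> u @ \oo --> l -> (fun n => u (s n)) @ \oo --> l.
Proof.
move=> s_incr; apply: cvg_comp => P [N _ HN]; exists N => // n /= Nn.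
have : (n <= s n)%N by elim: n {Nn} => // n IH; apply: leq_ltn_trans IH (s_incr n).
by move/(leq_trans Nn); apply: HN.
Qed.

Lemma cvg_fst_snd (T U : topologicalType) (y : nat -> T * U) (l1 : T) (l2 : U) :
  y @ \oo --> (l1, l2) -> (y n).1 @[n --> \oo] --> l1 /\ (y n).2 @[n --> \oo] --> l2.
Proof.
by move=> y_cvg; split; apply: cvg_comp y_cvg _; [exact: cvg_fst | exact: cvg_snd].
Qed.

Lemma PK_cvg_outer (T : topologicalType) (C : nat -> set T) (D : set T) (y : T) :
  PK_cvg C D -> (\forall n \near \oo, C n y) -> D y.
Proof.
move=> [_ outer] [N _ HN]; apply: (outer y (addn N) (fun=> y)) => [n||].
- by rewrite ltn_add2l.
- by move=> n; apply: HN; rewrite /= leq_addr.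
- exact: cvg_cst.
Qed.

Lemma uniform_bound (T : eqType) (s : seq T) (P : T -> R -> Prop) :
  (forall e M M', M <= M' -> P e M -> P e M') ->
  {in s, forall e, exists M, P e M} -> exists2 M, 0 <= M & {in s, forall e, P e M}.
Proof.
move=> P_mono; elim: s => [|e s IH] s_P; first by exists 0.
have [Me PMe] := s_P e (mem_head _ _).
have [Ms Ms0 PMs] := IH (sub_in1 (@mem_behead _ (e :: s)) s_P).
exists (Num.max Me Ms) => [|f]; first by rewrite le_max Ms0 orbT.
rewrite in_cons => /orP[/eqP->|fs]; first by apply: P_mono PMe; rewrite le_max lexx.
by apply: P_mono (PMs f fs); rewrite le_max lexx orbT.
Qed.

End Limits.

Section ConvexAnalysis.
Variables (R : realType) (m : nat).
Implicit Types (C : set 'rV[R]_m) (f : 'rV[R]_m -> \bar R).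

Lemma aff_hull2 C p1 p2 (al : R) : C p1 -> C p2 -> aff_hull C (al *: p1 + (1 - al) *: p2).
Proof.
move=> Cp1 Cp2; exists 2%N, (fun i => if val i == 0%N then p1 else p2),
  (fun i => if val i == 0%N then al else 1 - al).
split=> [i|]; first by case: ifP.
by rewrite !big_ord_recr !big_ord0 /= !add0r; split=> //; ring.
Qed.

Lemma rel_int_reflect C lb : rel_int C lb -> exists2 r, 0 < r &
  forall v, C v -> `|v - lb| < r -> C (2 *: v - lb) /\ C (2 *: lb - v).
Proof.
move=> [Clb /nbhs_normP [e /= e0 hull_C]].
exists (e / 2) => [|v Cv vlb]; first exact: divr_gt0.
have vlb2 : `|2 *: (v - lb)| < e by rewrite normrZ ger0_norm //; lra.
split; apply: hull_C => /=.
- by rewrite (_ : lb - (2 *: v - lb) = - (2 *: (v - lb))) ?normrN //; row_ring.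
- by rewrite (_ : 2 *: v - lb = 2 *: v + (1 - 2) *: lb); [apply: aff_hull2 | row_ring].
- by rewrite (_ : lb - (2 *: lb - v) = v - lb) //; [lra | row_ring].
- by rewrite (_ : 2 *: lb - v = 2 *: lb + (1 - 2) *: v); [apply: aff_hull2 | row_ring].
Qed.

Lemma aff_hull_in_span C s lb w : (forall p, C p -> in_span s (p - lb)) ->
  aff_hull C w -> in_span s (w - lb).
Proof.
move=> C_span [n [p [cc [Cp [cc1 ->]]]]].
have -> : \sum_(i < n) cc i *: p i - lb = \sum_(i < n) cc i *: (p i - lb).
  symmetry; under eq_bigr do rewrite scalerBr.
  by rewrite sumrB -scaler_suml cc1 scale1r.
apply: big_ind => [|x y|i _]; [exact: in_span0 | exact: in_spanD |].
exact/in_spanZ/C_span.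
Qed.

Lemma subdiff_fin f x v : subdiff f x v ->
  exists2 fx : R, f x = fx%:E & forall y, ((fx + dotv v (y - x))%R%:E <= f y)%E.
Proof. by move=> [/fineK fx Hv]; exists (fine (f x)) => // y; rewrite EFinD fx. Qed.

Lemma sodq_leE f x v t w (fx al : R) : f x = fx%:E -> 0 < t ->
  (sodq f x v t w <= al%:E)%E <->
  (f (x + t *: w)%R <= (fx + t * dotv v w + al * t ^+ 2 / 2)%R%:E)%E.
Proof.
move=> fx_eq t0; rewrite /sodq fx_eq.
have q0 : 0 < 2 / t ^+ 2 by rewrite divr_gt0 // exprn_gt0.
case: (f (x + t *: w)) => [y| |] /=.
- rewrite -!EFinB -EFinM !lee_fin -ler_pdivlMr //.
  have -> : al / (2 / t ^+ 2) = al * t ^+ 2 / 2 by field; rewrite gt_eqF ?exprn_gt0.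
  by split; lra.
- by rewrite gt0_mulye ?lte_fin.
- by rewrite gt0_mulNye ?lte_fin ?leNye.
Qed.

Lemma subdiff_sodq_le f x v v' t w (al : R) : subdiff f x v' -> 0 < t ->
  (sodq f x v t w <= al%:E)%E -> dotv v' w <= dotv v w + al * t / 2.
Proof.
move=> /subdiff_fin [fx fx_eq Hv'] t0 /(sodq_leE _ _ _ fx_eq t0).
move: (Hv' (x + t *: w)) => /le_trans /[apply].
rewrite addrAC subrr add0r dotvZr lee_fin => h.
rewrite -(ler_pM2l t0) mulrDr; lra.
Qed.

Definition sodq_epi_limit f (xb vb : 'rV[R]_m) (phi : 'rV[R]_m -> \bar R) :=
  forall (t : nat -> R) (x v : nat -> 'rV[R]_m),
    (forall n, 0 < t n) -> t @ \oo --> (0 : R) ->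
    x @ \oo --> xb -> v @ \oo --> vb ->
    (forall n, subdiff f (x n) (v n)) ->
    (fun n => f (x n)) @ \oo --> f xb ->
    epi_cvg (fun n => sodq f (x n) (v n) (t n)) phi.

End ConvexAnalysis.

Section PolyhedralGerm.
Variables (R : realType) (m : nat) (g : 'rV[R]_m -> \bar R).
Variables (k : nat) (a : 'I_k -> 'rV[R]_m) (b c : 'I_k -> R).
Hypothesis epi_g : forall x (al : R),
  (g x <= al%:E)%E <-> (forall i, dotv (a i) x + b i * al <= c i).
Hypothesis g_neqNy : forall x, g x <> -oo%E.
Variables (zb : 'rV[R]_m) (gam : R).
Hypothesis g_zb : g zb = gam%:E.

Definition active i := dotv (a i) zb + b i * gam == c i.

Definition tangent u (s : R) := forall i, active i -> dotv (a i) u + b i * s <= 0.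

Lemma tangent_of_le u s : (g (zb + u) <= (gam + s)%:E)%E -> tangent u s.
Proof.
by move=> /epi_g le_c i /eqP act_i; have := le_c i; rewrite dotvDr mulrDr -act_i; lra.
Qed.

Definition slack i := c i - dotv (a i) zb - b i * gam.

Definition slack_ratio i :=
  if active i then 0 else (m%:R * `|a i| + `|b i| + 1) / slack i.

(* Below this radius no inactive constraint can become active. *)
Definition tangent_radius := (1 + \sum_i slack_ratio i)^-1.

Lemma slack_ge0 i : 0 <= slack i.
Proof.
have /epi_g/(_ i) : (g zb <= gam%:E)%E by rewrite g_zb.
by rewrite /slack; lra.
Qed.

Lemma slack_ratio_ge0 i : 0 <= slack_ratio i.
Proof.
rewrite /slack_ratio; case: ifP => // _.
by rewrite divr_ge0 ?slack_ge0 // addr_ge0 // addr_ge0 // mulr_ge0.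
Qed.

Lemma tangent_radius_gt0 : 0 < tangent_radius.
Proof. by rewrite invr_gt0 ltr_pwDl // sumr_ge0 // => i _; apply: slack_ratio_ge0. Qed.

Lemma le_of_tangent u s : `|u| < tangent_radius -> `|s| < tangent_radius ->
  tangent u s -> (g (zb + u) <= (gam + s)%:E)%E.
Proof.
move=> hu hs u_s; apply/epi_g => i; rewrite dotvDr mulrDr.
have [act_i|inact_i] := boolP (active i).
  by move/eqP: act_i (u_s i act_i); lra.
have sl_gt0 : 0 < slack i.
  rewrite lt_def slack_ge0 andbT; apply: contra inact_i.
  by rewrite /active /slack !subr_eq0 subr_eq addrC => /eqP <-.
pose N := m%:R * `|a i| + `|b i| + 1.
pose S := \sum_j slack_ratio j.
have S0 : 0 <= S by rewrite sumr_ge0 // => j _; apply: slack_ratio_ge0.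
have NS : N / slack i <= S.
  rewrite /S (bigD1 i) //= /slack_ratio (negbTE inact_i) lerDl sumr_ge0 // => j _.
  exact: slack_ratio_ge0.
have rN : tangent_radius * N < slack i.
  rewrite mulrC ltr_pdivrMr ?ltr_pwDl // mulrC -ltr_pdivrMr //.
  exact: ltr_pwDl.
have au : dotv (a i) u <= tangent_radius * (m%:R * `|a i|).
  apply: le_trans (ler_norm _) _; apply: le_trans (dotv_norm_le _ _) _.
  by rewrite [X in _ <= X]mulrC ler_wpM2l ?mulr_ge0 // ltW.
have bs : b i * s <= tangent_radius * `|b i|.
  by apply: le_trans (ler_norm _) _; rewrite normrM [X in _ <= X]mulrC ler_wpM2l // ltW.
have := tangent_radius_gt0; move: rN; rewrite /N /slack !mulrDr mulr1; lra.
Qed.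

Lemma tangentD u s u' s' : tangent u s -> tangent u' s' -> tangent (u + u') (s + s').
Proof.
by move=> h h' i act_i; have := h i act_i; have := h' i act_i; rewrite dotvDr; lra.
Qed.

Lemma tangentZ t u s : 0 < t -> tangent (t *: u) (t * s) <-> tangent u s.
Proof.
move=> t0; have scale i :
    dotv (a i) (t *: u) + b i * (t * s) = t * (dotv (a i) u + b i * s).
  by rewrite dotvZr; ring.
by split=> h i /h; rewrite scale ?pmulr_rle0 // => ->.
Qed.

Lemma subdiff_tangentP v : subdiff g zb v <-> forall u s, tangent u s -> dotv v u <= s.
Proof.
split.
  move=> /subdiff_fin [gz gz_eq Hv] u s u_s; move: gz_eq Hv; rewrite g_zb => -[<-] Hv.
  have r0 : `|0 : 'rV[R]_m| < tangent_radius by rewrite normr0 tangent_radius_gt0.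
  have r0' : `|0 : R| < tangent_radius by rewrite normr0 tangent_radius_gt0.
  have [t t0 []] := exists_pos_ray u s r0 r0'; rewrite !add0r => hu hs.
  have := le_of_tangent hu hs (proj2 (tangentZ _ _ t0) u_s).
  move: (Hv (zb + t *: u)) => /le_trans /[apply].
  by rewrite addrAC subrr add0r dotvZr lee_fin lerD2l ler_pM2l.
move=> Hv; split=> [|y]; first by rewrite g_zb.
case E: (g y) => [r| |]; [|by rewrite leey|by case: (g_neqNy E)].
have : (g (zb + (y - zb)) <= (gam + (r - gam))%:E)%E by rewrite !subrKC E.
by move=> /tangent_of_le /Hv; rewrite g_zb lee_fin; lra.
Qed.

Lemma active_b_le0 i : active i -> b i <= 0.
Proof.
move=> act_i; have : (g (zb + 0) <= (gam + 1)%:E)%E by rewrite addr0 g_zb lee_fin lerDl.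
by move=> /tangent_of_le /(_ i act_i); rewrite dotv0r mulr1 add0r.
Qed.

Lemma subdiff_at_base x v gx : g x = gx%:E -> subdiff g x v ->
  `|x - zb| < tangent_radius -> `|gx - gam| < tangent_radius -> subdiff g zb v.
Proof.
move=> gx_eq /subdiff_fin [gx' gx'_eq Hv] hx hgx.
move: gx'_eq Hv; rewrite gx_eq => -[<-] Hv.
have x_tan : tangent (x - zb) (gx - gam) by apply: tangent_of_le; rewrite !subrKC gx_eq.
apply/subdiff_tangentP => w tau w_tau.
have [t t0 [hxt hgt]] := exists_pos_ray w tau hx hgx.
have := le_of_tangent hxt hgt (tangentD x_tan (proj2 (tangentZ _ _ t0) w_tau)).
rewrite (addrA zb) (addrA gam) !subrKC; move: (Hv (x + t *: w)) => /le_trans /[apply].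
by rewrite addrAC subrr add0r dotvZr lee_fin lerD2l ler_pM2l.
Qed.

Lemma tangent_closed (u : nat -> 'rV[R]_m) (s : nat -> R) ul sl :
  u @ \oo --> ul -> s @ \oo --> sl ->
  (\forall n \near \oo, tangent (u n) (s n)) -> tangent ul sl.
Proof.
move=> u_cvg s_cvg near_tan i act_i.
apply: (@cvgr_to_le _ \oo _ _ (fun n => dotv (a i) (u n) + b i * s n)).
  exact: cvgD (dotv_cvg (cvg_cst _) u_cvg) (cvgM (cvg_cst _) s_cvg).
by apply: filterS near_tan => n /(_ i act_i).
Qed.

Section Critical.
Variable lb : 'rV[R]_m.
Hypothesis lb_sub : subdiff g zb lb.

Lemma tangent_gap_ge0 u s : tangent u s -> 0 <= s - dotv lb u.
Proof. by move=> /(proj1 (subdiff_tangentP lb) lb_sub); rewrite subr_ge0. Qed.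

Lemma subdiff_segment q t :
  subdiff g zb (lb + q) -> 0 <= t <= 1 -> subdiff g zb (lb + t *: q).
Proof.
move=> /subdiff_tangentP lbq_le /andP[t0 t1]; apply/subdiff_tangentP => u s u_s.
have := tangent_gap_ge0 u_s; have := lbq_le u s u_s; rewrite !dotvDl dotvZl => h1 h0.
have : t * dotv q u <= t * (s - dotv lb u) by rewrite ler_wpM2l //; lra.
have : t * (s - dotv lb u) <= s - dotv lb u by rewrite ler_piMl.
lra.
Qed.

Definition critical w := tangent w (dotv lb w).

Definition normal i := a i + b i *: lb.

Lemma dotv_normal i w : dotv (normal i) w = dotv (a i) w + b i * dotv lb w.
Proof. by rewrite dotvDl dotvZl. Qed.

Lemma criticalP w : critical w <-> forall i, active i -> dotv (normal i) w <= 0.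
Proof. by split=> h i /h; rewrite dotv_normal. Qed.

Definition normal_dir i := if b i < 0 then (- b i)^-1 *: normal i else normal i.

Lemma subdiff_add_normal_dir i : active i -> subdiff g zb (lb + normal_dir i).
Proof.
move=> act_i; apply/subdiff_tangentP => u s u_s.
have gap := tangent_gap_ge0 u_s; have ai_u := u_s i act_i.
rewrite dotvDl /normal_dir; case: ifP => [b_lt0|b_ge0].
  suff : (- b i)^-1 * dotv (normal i) u <= s - dotv lb u by rewrite dotvZl; lra.
  rewrite mulrC ler_pdivrMr ?oppr_gt0 // dotv_normal.
  have -> : (s - dotv lb u) * - b i = - (b i * s) + b i * dotv lb u by ring.
  lra.
have b0 : b i = 0 by apply/eqP; rewrite eq_le active_b_le0 // leNgt b_ge0.
by move: ai_u; rewrite dotv_normal b0 !mul0r !addr0; lra.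
Qed.

Lemma normal_dotv_le u s i : tangent u s -> active i ->
  dotv (normal i) u <= (\sum_j `|b j|) * (s - dotv lb u).
Proof.
move=> u_s act_i; have gap := tangent_gap_ge0 u_s.
have : - b i * (s - dotv lb u) <= (\sum_j `|b j|) * (s - dotv lb u).
  rewrite ler_wpM2r // (le_trans (ler_norm _)) // normrN.
  by rewrite (bigD1 i) //= lerDl sumr_ge0.
have := u_s i act_i; rewrite dotv_normal; lra.
Qed.

Definition critical_orth :=
  forall q, subdiff g zb (lb + q) -> forall w, critical w -> dotv q w = 0.

Section Orth.
Hypothesis lb_orth : critical_orth.

Lemma normal_orth i w : active i -> critical w -> dotv (normal i) w = 0.
Proof.
move=> act_i w_crit; have := lb_orth (subdiff_add_normal_dir act_i) w_crit.
rewrite /normal_dir; case: ifP => // b_lt0; rewrite dotvZl => /eqP.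
by rewrite mulf_eq0 invr_eq0 oppr_eq0 lt_eqF //= => /eqP.
Qed.

Lemma criticalN w : critical w -> critical (- w).
Proof.
move=> w_crit; apply/criticalP => i act_i.
by rewrite dotvNr (normal_orth act_i w_crit) oppr0.
Qed.

Lemma tangent_sub_critical u w tau :
  critical u -> tangent (u + w) (dotv lb u + tau) -> tangent w tau.
Proof.
move=> /criticalN Nu_crit /tangentD /(_ Nu_crit).
by rewrite dotvNr !(addrAC _ _ (- _)) !subrr !add0r.
Qed.

Definition normals := [seq normal i | i <- enum 'I_k & active i].

Lemma normalsP e : reflect (exists2 i, active i & e = normal i) (e \in normals).
Proof.
apply: (iffP mapP) => [[i]|[i act_i ->]]; first by rewrite mem_filter => /andP[]; exists i.
by exists i; rewrite // mem_filter act_i mem_enum.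
Qed.

Lemma critical_normals w : {in normals, forall e, dotv e w <= 0} -> critical w.
Proof. by move=> nw; apply/criticalP => i act_i; apply/nw/normalsP; exists i. Qed.

Lemma normals_dotv_abs_le : exists2 M, 0 <= M & forall u s, tangent u s ->
  {in normals, forall e, `|dotv e u| <= M * (s - dotv lb u)}.
Proof.
pose P e M := forall u s, tangent u s -> `|dotv e u| <= M * (s - dotv lb u).
suff [M M0 HM] : exists2 M, 0 <= M & {in normals, forall e, P e M}.
  by exists M => // u s u_s e /HM; apply.
apply: uniform_bound => [e M M' MM' PM u s u_s|_ /normalsP [i act_i ->]].
  by apply: le_trans (PM u s u_s) _; rewrite ler_wpM2r ?tangent_gap_ge0.
pose B := \sum_j `|b j|.
have B0 : 0 <= B by rewrite sumr_ge0.
(* [- normal i] lies in the cone of the active normals, as no critical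
   direction separates it from them. *)
have : in_cone normals (- normal i).
  have [//|[w nw]] := farkas normals (- normal i).
  by rewrite dotvNl (normal_orth act_i (critical_normals nw)) oppr0 ltxx.
move=> /in_cone_dotv_le [M0 M00 HM0]; exists (M0 * B + B) => u s u_s.
have gap := tangent_gap_ge0 u_s.
have normals_le : {in normals, forall e, dotv e u <= B * (s - dotv lb u)}.
  by move=> _ /normalsP [j act_j ->]; apply: normal_dotv_le.
have up : dotv (normal i) u <= B * (s - dotv lb u) := normal_dotv_le u_s act_i.
have := HM0 u _ (mulr_ge0 B0 gap) normals_le.
have := mulr_ge0 M00 (mulr_ge0 B0 gap); have := mulr_ge0 B0 gap.
by rewrite dotvNl ler_norml mulrDl -mulrA; lra.
Qed.

Lemma subdiff_in_span p : subdiff g zb p -> in_span normals (p - lb).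
Proof.
move=> p_sub; have [//|[u u_perp pu]] := farkas_span normals (p - lb).
have u_crit : critical u by apply: critical_normals => e /u_perp ->.
by move: pu; rewrite (lb_orth _ u_crit) ?ltxx // subrKC.
Qed.

Lemma rel_int_of_critical_orth : rel_int (subdiff g zb) lb.
Proof.
have [M M0 HM] := normals_dotv_abs_le.
have [kap kap0 Hkap] := in_span_dotv_le normals.
have kM0 : 0 <= kap * M by rewrite mulr_ge0.
split=> //; apply/nbhs_normP; exists (kap * M + 1)^-1 => [|w /= lb_w].
  by rewrite /= invr_gt0 ltr_pwDr.
move=> /(aff_hull_in_span subdiff_in_span) w_span.
apply/subdiff_tangentP => u s u_s.
have gap := tangent_gap_ge0 u_s.
have kMw : kap * M * `|w - lb| <= 1.
  rewrite distrC in lb_w; apply: le_trans (ler_wpM2l kM0 (ltW lb_w)) _.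
  by rewrite ler_pdivrMr ?ltr_pwDr // mul1r lerDl.
have := Hkap _ u _ w_span (HM u s u_s).
have -> : kap * `|w - lb| * (M * (s - dotv lb u)) =
          kap * M * `|w - lb| * (s - dotv lb u) by ring.
have := ler_piMl gap kMw.
rewrite -[dotv w u](subrKC (dotv lb u)) -dotvBl; lra.
Qed.

End Orth.

Lemma epi_limit_critical phi w :
  sodq_epi_limit g zb lb phi -> critical w -> epi phi (w, 0).
Proof.
move=> lim_phi w_crit; apply: (PK_cvg_outer (lim_phi _ _ _ harmonic_gt0 cvg_harmonic
  (cvg_cst zb) (cvg_cst lb) (fun=> lb_sub) (cvg_cst _))).
have rho0 := tangent_radius_gt0.
have := near_normZ_lt (dotv lb w) cvg_harmonic rho0.
apply: filterS2 (near_normZ_lt w cvg_harmonic rho0) => n hw hlbw.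
rewrite /epi /= (sodq_leE _ _ _ g_zb (harmonic_gt0 n)) !mul0r addr0.
exact: le_of_tangent hw hlbw (proj2 (tangentZ _ _ (harmonic_gt0 n)) w_crit).
Qed.

Lemma critical_orth_of_epi_limit phi : sodq_epi_limit g zb lb phi -> critical_orth.
Proof.
move=> lim_phi q lbq_sub w w_crit.
have qw_le0 : dotv q w <= 0.
  by have := proj1 (subdiff_tangentP _) lbq_sub _ _ w_crit; rewrite dotvDl; lra.
apply/eqP; rewrite eq_le qw_le0 /=.
pose ep n : R := harmonic n.
have ep_gt0 n : 0 < ep n := harmonic_gt0 n.
have v_sub n : subdiff g zb (lb + ep n *: q).
  by apply: subdiff_segment; rewrite // ltW //= invf_le1 // ler1n.
have v_cvg : lb + ep n *: q @[n --> \oo] --> lb.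
  rewrite -[X in _ --> X]addr0 -(scale0r q); apply: cvgD (cvg_cst _) _.
  exact: cvgZ cvg_harmonic (cvg_cst q).
have t_gt0 n : 0 < ep n * ep n by rewrite mulr_gt0.
have t_cvg : ep n * ep n @[n --> \oo] --> (0 : R).
  by rewrite -(mulr0 (0 : R)); apply: cvgM; exact: cvg_harmonic.
have [inner _] := lim_phi _ (fun=> zb) _ t_gt0 t_cvg (cvg_cst _) v_cvg v_sub (cvg_cst _).
have [y [y_epi /cvg_fst_snd [y1_cvg y2_cvg]]] :=
  inner _ (epi_limit_critical lim_phi w_crit).
(* Against the quotients at [lb + ep n *: q] with step [ep n * ep n], the subgradient
   inequality for [lb] leaves [0 <= dotv q (y n).1 + (y n).2 * ep n / 2]. *)
apply: (@cvgr_to_ge _ \oo _ _ (fun n => dotv q (y n).1 + (y n).2 * ep n / 2)).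
  have -> : dotv q w = dotv q w + 0 * 0 / 2 by rewrite !mul0r addr0.
  apply: cvgD; first exact: dotv_cvg (cvg_cst _) y1_cvg.
  exact: cvgM (cvgM y2_cvg cvg_harmonic) (cvg_cst _).
apply: filterS y_epi => n y_epi.
have := subdiff_sodq_le lb_sub (t_gt0 n) y_epi.
rewrite dotvDl dotvZl -(pmulr_rge0 _ (ep_gt0 n)).
have -> : ep n * (dotv q (y n).1 + (y n).2 * ep n / 2) =
  ep n * dotv q (y n).1 + (y n).2 * (ep n * ep n) / 2 by ring.
lra.
Qed.

Section Reflect.
Variable r : R.
Hypothesis r_gt0 : 0 < r.
Hypothesis lb_reflect : forall v, subdiff g zb v -> `|v - lb| < r ->
  subdiff g zb (2 *: v - lb) /\ subdiff g zb (2 *: lb - v).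

Lemma subdiff_critical_eq v w :
  subdiff g zb v -> `|v - lb| < r -> critical w -> dotv v w = dotv lb w.
Proof.
move=> v_sub vlb w_crit; have [_ /subdiff_tangentP/(_ _ _ w_crit)] := lb_reflect v_sub vlb.
have := proj1 (subdiff_tangentP _) v_sub _ _ w_crit.
by rewrite dotvBl dotvZl => h1 h2; apply/eqP; rewrite eq_le h1 /=; lra.
Qed.

Lemma critical_orth_of_reflect : critical_orth.
Proof.
move=> q lbq_sub w w_crit.
pose t := Num.min 1 (r / (`|q| + 1)).
have q1 : 0 < `|q| + 1 by rewrite ltr_pwDr.
have t_gt0 : 0 < t by rewrite lt_min ltr01 divr_gt0.
have tq : `|t *: q| < r.
  have t_le : t <= r / (`|q| + 1) by rewrite ge_min lexx orbT.
  rewrite normrZ gtr0_norm //; apply: le_lt_trans (ler_wpM2r (normr_ge0 q) t_le) _.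
  by rewrite mulrAC ltr_pdivrMr // ltr_pM2l // ltrDl.
have t01 : 0 <= t <= 1 by rewrite ltW //= ge_min lexx.
have := subdiff_critical_eq (subdiff_segment lbq_sub t01) _ w_crit.
rewrite (addrC lb) addrK => /(_ tq); rewrite dotvDl dotvZl => tqw.
have /eqP : t * dotv q w = 0 by lra.
by rewrite mulf_eq0 gt_eqF //= => /eqP.
Qed.

Lemma tangent_reflect_eq v d s : subdiff g zb v -> `|v - lb| < r ->
  tangent d s -> s <= dotv v d -> dotv v d = s /\ dotv lb d = s.
Proof.
move=> v_sub vlb d_s s_le; have [/subdiff_tangentP /(_ _ _ d_s)] := lb_reflect v_sub vlb.
have := proj1 (subdiff_tangentP _) v_sub _ _ d_s.
have := proj1 (subdiff_tangentP _) lb_sub _ _ d_s.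
by rewrite dotvBl dotvZl; lra.
Qed.

(* [m%:R * (`|lb| + 1)] bounds [m%:R * `|v|] for [`|v - lb| <= 1] in [dotv_norm_le]. *)
Definition face_radius :=
  Num.min (Num.min 1 r) (tangent_radius / (2 * (m%:R * (`|lb| + 1) + 1))).

Lemma face_radius_gt0 : 0 < face_radius.
Proof.
by rewrite !lt_min ltr01 r_gt0 divr_gt0 ?tangent_radius_gt0 ?mulr_gt0 ?ltr_pwDr ?mulr_ge0.
Qed.

Lemma face_radius_le1 : face_radius <= 1.
Proof. by rewrite !ge_min lexx. Qed.

Lemma face_radius_le_r : face_radius <= r.
Proof. by rewrite !ge_min lexx orbT. Qed.

Lemma face_bounds x v : `|x - zb| < face_radius -> `|v - lb| <= 1 ->
  [/\ `|x - zb| < tangent_radius / 2, `|dotv v (x - zb)| < tangent_radius / 2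
    & `|dotv lb (x - zb)| < tangent_radius / 2].
Proof.
move=> hx hv; set M := m%:R * (`|lb| + 1) + 1.
have M_ge1 : 1 <= M by rewrite lerDr mulr_ge0.
have rM : face_radius * M <= tangent_radius / 2.
  have : face_radius <= tangent_radius / (2 * M) by rewrite ge_min lexx orbT.
  by rewrite invfM mulrA ler_pdivlMr // (lt_le_trans ltr01 M_ge1).
have dotv_lt u : `|u - lb| <= 1 -> `|dotv u (x - zb)| < tangent_radius / 2.
  move=> hu; have u_le : `|u| <= `|lb| + 1.
    by rewrite -(subrKC lb u); apply: le_trans (ler_normD _ _) _; rewrite lerD2l.
  have mu : m%:R * `|u| <= M.
    by apply: le_trans (ler_wpM2l (ler0n _ m) u_le) _; rewrite lerDl.
  apply: le_lt_trans (dotv_norm_le _ _) _.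
  apply: le_lt_trans (ler_wpM2r (normr_ge0 _) mu) (lt_le_trans _ rM).
  by rewrite mulrC ltr_pM2r // (lt_le_trans ltr01 M_ge1).
split; [|exact: dotv_lt|by apply: dotv_lt; rewrite subrr normr0].
apply: lt_le_trans hx (le_trans _ rM).
by rewrite ler_peMr // ltW // face_radius_gt0.
Qed.

Definition near_graph x v :=
  [/\ subdiff g x v, `|x - zb| < face_radius & `|v - lb| < face_radius].

Lemma subdiff_face x v : near_graph x v ->
  [/\ g x = (gam + dotv lb (x - zb))%:E, subdiff g zb v & critical (x - zb)].
Proof.
move=> [xv_sub hx hv]; have [gx gx_eq Hx] := subdiff_fin xv_sub.
have [hx2 hvx hlbx] := face_bounds hx (ltW (lt_le_trans hv face_radius_le1)).
have lo : dotv lb (x - zb) <= gx - gam.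
  by move: (proj2 lb_sub x); rewrite g_zb gx_eq lee_fin; lra.
have hi : gx - gam <= dotv v (x - zb).
  by have := Hx zb; rewrite g_zb lee_fin -opprB dotvNr; lra.
have gap : `|gx - gam| < tangent_radius.
  have := tangent_radius_gt0; move: hlbx hvx; rewrite !ltr_norml.
  by move=> /andP[? ?] /andP[? ?] ?; apply/andP; split; lra.
have hx' : `|x - zb| < tangent_radius by have := tangent_radius_gt0; lra.
have v_sub := subdiff_at_base gx_eq xv_sub hx' gap.
have x_tan : tangent (x - zb) (gx - gam) by apply: tangent_of_le; rewrite !subrKC gx_eq.
have [_ lb_eq] := tangent_reflect_eq v_sub (lt_le_trans hv face_radius_le_r) x_tan hi.
by split=> //; rewrite /critical lb_eq // gx_eq subrKC.
Qed.

Lemma near_epi_sodq_critical t x v w al :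
  (forall n, 0 < t n) -> t @ \oo --> (0 : R) ->
  (\forall n \near \oo, near_graph (x n) (v n)) ->
  critical w -> 0 <= al -> \forall n \near \oo, epi (sodq g (x n) (v n) (t n)) (w, al).
Proof.
move=> t_gt0 t_cvg near_xv w_crit al0.
have rho2 : 0 < tangent_radius / 2 by rewrite divr_gt0 ?tangent_radius_gt0.
apply: filterS3 near_xv (near_normZ_lt w t_cvg rho2)
  (near_normZ_lt (dotv lb w) t_cvg rho2) => n xv_near tw tlbw.
have [g_x v_sub d_crit] := subdiff_face xv_near.
have [_ hx hv] := xv_near.
have [hx2 _ hlbx] := face_bounds hx (ltW (lt_le_trans hv face_radius_le1)).
have d_tw : `|x n - zb + t n *: w| < tangent_radius.
  by apply: le_lt_trans (ler_normD _ _) _; lra.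
have tlbw' : `|t n * dotv lb w| < tangent_radius / 2 := tlbw.
have lb_tw : `|dotv lb (x n - zb) + t n * dotv lb w| < tangent_radius.
  by apply: le_lt_trans (ler_normD _ _) _; lra.
rewrite /epi /= (sodq_leE _ _ _ g_x (t_gt0 n)).
rewrite (subdiff_critical_eq v_sub (lt_le_trans hv face_radius_le_r) w_crit).
have := le_of_tangent d_tw lb_tw (tangentD d_crit (proj2 (tangentZ _ _ (t_gt0 n)) w_crit)).
rewrite (addrA zb) subrKC => /le_trans; apply.
by rewrite lee_fin addrA lerDl divr_ge0 // mulr_ge0 // sqr_ge0.
Qed.

Lemma critical_of_epi_sodq t x v vl y w al :
  (forall n, 0 < t n) -> t @ \oo --> (0 : R) -> v @ \oo --> vl -> y @ \oo --> (w, al) ->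
  subdiff g zb vl -> `|vl - lb| < r -> (\forall n \near \oo, near_graph (x n) (v n)) ->
  (forall n, epi (sodq g (x n) (v n) (t n)) (y n)) -> critical w /\ 0 <= al.
Proof.
move=> t_gt0 t_cvg v_cvg /cvg_fst_snd [y1_cvg y2_cvg] vl_sub vl_lb near_xv y_epi.
split; last first.
  apply: (@cvgr_to_ge _ \oo _ _ (fun n => (y n).2) _ _ y2_cvg).
  apply: filterS near_xv => n [xv_sub _ _].
  have := subdiff_sodq_le xv_sub (t_gt0 n) (y_epi n).
  by rewrite lerDl pmulr_lge0 ?invr_gt0 // pmulr_lge0.
have w_tan : tangent w (dotv vl w).
  apply: (tangent_closed y1_cvg (s := fun n => dotv (v n) (y n).1 + (y n).2 * t n / 2)).
    have -> : dotv vl w = dotv vl w + al * 0 / 2 by rewrite mulr0 mul0r addr0.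
    exact: cvgD (dotv_cvg v_cvg y1_cvg) (cvgM (cvgM y2_cvg t_cvg) (cvg_cst _)).
  apply: filterS near_xv => n /subdiff_face [g_x _ d_crit].
  have := y_epi n; rewrite /epi /= (sodq_leE _ _ _ g_x (t_gt0 n)).
  rewrite -[in X in g X](subrKC zb (x n)) -(addrA zb) -2!(addrA gam) -(addrA (dotv lb _)).
  move=> /tangent_of_le d_ty.
  have := tangent_sub_critical critical_orth_of_reflect d_crit d_ty.
  have -> : t n * dotv (v n) (y n).1 + (y n).2 * t n ^+ 2 / 2 =
    t n * (dotv (v n) (y n).1 + (y n).2 * t n / 2) by ring.
  by move/(tangentZ _ _ (t_gt0 n)).
have [_ lb_eq] := tangent_reflect_eq vl_sub vl_lb w_tan (lexx _).
by rewrite /critical lb_eq.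
Qed.

Definition critical_indicator w : \bar R := if `[< critical w >] then 0%E else +oo%E.

Lemma epi_critical_indicator w al :
  epi critical_indicator (w, al) <-> critical w /\ 0 <= al.
Proof.
rewrite /epi /critical_indicator /=; case: asboolP => [w_crit|w_ncrit].
  by rewrite lee_fin; split=> [|[]].
by split=> // -[].
Qed.

Lemma strictly_twice_epi_diff_near_graph x v :
  near_graph x v -> strictly_twice_epi_diff g x v.
Proof.
move=> xv_near; have [xv_sub hx hv] := xv_near; split=> //; exists critical_indicator.
move=> t xs vs t_gt0 t_cvg x_cvg v_cvg xsvs_sub _.
have near_xsvs (s : nat -> nat) : (forall n, (s n < s n.+1)%N) ->
    \forall n \near \oo, near_graph (xs (s n)) (vs (s n)).
  move=> s_incr; near=> n; split=> //; near: n.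
    exact: near_norm_lt (cvgB (cvg_subseq s_incr x_cvg) (cvg_cst zb)) hx.
  exact: near_norm_lt (cvgB (cvg_subseq s_incr v_cvg) (cvg_cst lb)) hv.
split=> [[w al] /epi_critical_indicator [w_crit al0]|[w al] s y s_incr y_epi y_cvg].
  exists (fun=> (w, al)); split; last exact: cvg_cst.
  exact: near_epi_sodq_critical t_gt0 t_cvg (near_xsvs id ltnSn) w_crit al0.
apply/epi_critical_indicator; have [_ v_sub _] := subdiff_face xv_near.
apply: (critical_of_epi_sodq _ (cvg_subseq s_incr t_cvg) (cvg_subseq s_incr v_cvg) y_cvg
  v_sub (lt_le_trans hv face_radius_le_r) (near_xsvs s s_incr) y_epi).
by move=> n; apply: t_gt0.
Unshelve. all: by end_near. Qed.

End Reflect.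

End Critical.

End PolyhedralGerm.

Unset Implicit Arguments. Set Strict Implicit.

Theorem theorem4p3 (R : realType) (m : nat) (g : 'rV[R]_m -> \bar R)
    (zbar lbar : 'rV[R]_m) :
  polyhedral g -> subdiff g zbar lbar ->
  ((\forall p \near (zbar, lbar),
       subdiff g p.1 p.2 -> strictly_twice_epi_diff g p.1 p.2)
   <-> rel_int (subdiff g zbar) lbar).
Proof.
move=> [[g_neqNy _] [k [a [b [c epi_eq]]]]] lb_sub.
have epi_g x (al : R) : (g x <= al%:E)%E <-> (forall i, dotv (a i) x + b i * al <= c i).
  by have := congr1 (fun S => S (x, al)) epi_eq; rewrite /epi /= => ->.
have [gam g_zb _] := subdiff_fin lb_sub.
split=> [near_twice|lb_ri].
  have [_ [phi lim_phi]] := nbhs_singleton near_twice lb_sub.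
  apply: (rel_int_of_critical_orth epi_g g_neqNy g_zb lb_sub).
  exact: critical_orth_of_epi_limit lim_phi.
have [r r_gt0 lb_reflect] := rel_int_reflect lb_ri.
pose del := face_radius a b c zbar gam lbar r.
have del_gt0 : 0 < del := face_radius_gt0 epi_g g_zb lbar r_gt0.
exists ([set x | `|x - zbar| < del], [set v | `|v - lbar| < del]).
  by split; apply/(@nbhs_normP R 'rV[R]_m); exists del => // y /=; rewrite distrC.
move=> [x v] [/= hx hv] xv_sub.
by apply: (strictly_twice_epi_diff_near_graph epi_g g_neqNy g_zb lb_sub r_gt0 lb_reflect).
Qed.
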